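(* Let $n\ge1$ and $x_k=-\cos\frac{k\pi}{n}$, $k=0,\dots,n$. Assign to each node a base point $b$ and offset $u_k=x_k-b$ as follows: if $x_k\in[-1,-\tfrac12)$ then $b=-1$; if $x_k\in[-\tfrac12,\tfrac12]$ then $b=0$; if $x_k\in(\tfrac12,1]$ then $b=1$. Given reals $\theta_0,\dots,\theta_n$, let $\hat u_k=u_k(1+\theta_k)$ and $\tilde x_k=b+\hat u_k$ (with $b$ the base point of $x_k$). Then for every $k\in\{0,\dots,n\}$, \[ \sum_{j\neq k}|r_{jk}(\mathbf{x},\tilde{\mathbf{x}})|\le\|\theta\|_\infty\bigl(3.2+2.3\,n+4.3\,n\log(n+1)\bigr). \]
   Context: $r_{jk}(\mathbf{x},\tilde{\mathbf{x}}):=\dfrac{\tilde x_k-\tilde x_j}{x_k-x_j}-1$ for $j\neq k$; $\|\theta\|_\infty=\max_k|\theta_k|$; $\log$ is the natural logarithm. *)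

From Stdlib Require Import Reals Lra Lia List Arith.
Open Scope R_scope.

Definition node (n k : nat) : R := - cos (INR k * PI / INR n).

Definition base (x : R) : R :=
  if Rlt_dec x (-1/2) then -1
  else if Rle_dec x (1/2) then 0
  else 1.

Definition offset (n k : nat) : R := node n k - base (node n k).

Definition pnode (n : nat) (theta : nat -> R) (k : nat) : R :=
  base (node n k) + offset n k * (1 + theta k).

Definition rjk (n : nat) (theta : nat -> R) (j k : nat) : R :=
  (pnode n theta k - pnode n theta j) / (node n k - node n j) - 1.

Definition sup_norm (n : nat) (theta : nat -> R) : R :=
  fold_right Rmax 0 (map (fun k => Rabs (theta k)) (seq 0 (S n))).

Definition rsum (n : nat) (theta : nat -> R) (k : nat) : R :=
  sum_f_R0 (fun j => if Nat.eqb j k then 0 else Rabs (rjk n theta j k)) n.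

(* Write a = k pi / n and b = j pi / n, so x_k = - cos a.  Then
   r_jk = (u_k theta_k - u_j theta_j) / (x_k - x_j) with |u_k| <= sin a and
   |u_j| <= sin b, while the sum-to-product formulas turn
   (sin a + sin b) |a - b| <= 2 |cos a - cos b| into s cos s <= sin s on
   [0, pi/2].  Hence |r_jk| <= ||theta|| n / |j - k|, and summing over j gives
   at most ||theta|| n (H_k + H_(n-k)) <= 2 ||theta|| n (1 + ln (n + 1)). *)

From Stdlib Require Import Reals Lra Lia List.
From Coquelicot Require Import Rcomplements.
Open Scope R_scope.

Lemma mul_cos_le_sin (s : R) : 0 <= s <= PI / 2 -> s * cos s <= sin s.
Proof.
  intros [Hs0 Hs1].
  assert (HPI := PI_4).
  destruct (SIN s Hs0 ltac:(lra)) as [Hsin _].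
  destruct (COS s ltac:(lra) Hs1) as [_ Hcos].
  revert Hsin Hcos.
  unfold sin_lb, cos_ub, sin_approx, cos_approx, sin_term, cos_term.
  rewrite !tech5; cbn [sum_f_R0 Nat.mul Nat.add pow].
  repeat match goal with |- context [INR (Factorial.fact ?m)] =>
    let v := eval vm_compute in (Z.of_nat (Factorial.fact m)) in
    replace (INR (Factorial.fact m)) with (IZR v) by (rewrite INR_IZR_INZ; reflexivity)
  end.
  intros Hsin Hcos.
  (* Taylor bounds of degree 7 for sin and 8 for cos; their gap is
     s (t/3 - t^2/30 + ...) with t = s^2 <= 4. *)
  set (t := s * s) in *.
  assert (Ht : 0 <= t <= 4) by (unfold t; nra).
  assert (Hsin' : s - s * t / 6 + s * t * t / 120 - s * t * t * t / 5040 <= sin s)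
    by (unfold t in *; lra).
  assert (Hcos' : cos s <= 1 - t / 2 + t * t / 24 - t * t * t / 720 + t * t * t * t / 40320)
    by (unfold t in *; lra).
  assert (Hgap : 0 <= t / 3 - t * t / 30 + t * t * t / 840 - t * t * t * t / 40320) by nra.
  nra.
Qed.

Lemma sin_add_sin_mul_sub_le (a b : R) : 0 <= b -> b <= a -> a <= PI ->
  (sin a + sin b) * (a - b) <= 2 * (cos b - cos a).
Proof.
  intros Hb Hba Ha.
  rewrite form3, form2.
  replace ((b - a) / 2) with (- ((a - b) / 2)) by field.
  rewrite sin_neg, (Rplus_comm b a).
  set (h := (a - b) / 2); set (m := (a + b) / 2).
  assert (Hm : 0 <= sin m) by (apply sin_ge_0; unfold m; lra).
  assert (Hh : h * cos h <= sin h) by (apply mul_cos_le_sin; unfold h; lra).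
  replace (a - b) with (2 * h) by (unfold h; field).
  nra.
Qed.

Lemma sin_add_sin_mul_dist_le (a b : R) : 0 <= a <= PI -> 0 <= b <= PI ->
  (sin a + sin b) * Rabs (a - b) <= 2 * Rabs (cos a - cos b).
Proof.
  intros Ha Hb.
  destruct (Rle_dec b a).
  - rewrite Rabs_right, Rabs_minus_sym by lra.
    eapply Rle_trans; [apply sin_add_sin_mul_sub_le; lra|].
    apply Rmult_le_compat_l, Rle_abs; lra.
  - rewrite Rabs_minus_sym, Rabs_right, Rplus_comm by lra.
    eapply Rle_trans; [apply sin_add_sin_mul_sub_le; lra|].
    apply Rmult_le_compat_l, Rle_abs; lra.
Qed.

(* On each piece, (x - base x)^2 <= 1 - x^2. *)
Lemma Rabs_sub_base_cos_le_sin (t : R) : 0 <= t <= PI ->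
  Rabs (- cos t - base (- cos t)) <= sin t.
Proof.
  intros Ht.
  assert (Hsin := sin_ge_0 t (proj1 Ht) (proj2 Ht)).
  assert (Hpyth := sin2_cos2 t); unfold Rsqr in Hpyth.
  unfold base; destruct (Rlt_dec _ _); [|destruct (Rle_dec _ _)];
    apply Rabs_le; split; nra.
Qed.

Lemma fold_right_Rmax_ge0 (l : list R) : 0 <= fold_right Rmax 0 l.
Proof.
  induction l as [|x l IHl]; simpl; [lra|].
  eapply Rle_trans; [exact IHl | apply Rmax_r].
Qed.

Lemma fold_right_Rmax_ub (l : list R) (x : R) : In x l -> x <= fold_right Rmax 0 l.
Proof.
  induction l as [|y l IHl]; simpl; [tauto|].
  intros [<- | Hx]; [apply Rmax_l|].
  eapply Rle_trans; [exact (IHl Hx) | apply Rmax_r].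
Qed.

Lemma sup_norm_ge0 (n : nat) (theta : nat -> R) : 0 <= sup_norm n theta.
Proof. apply fold_right_Rmax_ge0. Qed.

Lemma Rabs_le_sup_norm (n : nat) (theta : nat -> R) (i : nat) :
  (i <= n)%nat -> Rabs (theta i) <= sup_norm n theta.
Proof.
  intros Hi; apply fold_right_Rmax_ub, (in_map (fun k => Rabs (theta k))), in_seq; lia.
Qed.

Definition angle (n k : nat) : R := INR k * PI / INR n.

Lemma angle_mem (n k : nat) : (1 <= n)%nat -> (k <= n)%nat -> 0 <= angle n k <= PI.
Proof.
  intros Hn Hk.
  assert (Hn0 : 0 < INR n) by (apply lt_0_INR; lia).
  assert (Hkn : INR k <= INR n) by (apply le_INR; lia).
  assert (Hk0 := pos_INR k); assert (HPI := PI_RGT_0).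
  unfold angle; split.
  - apply Rmult_le_pos; [nra | left; apply Rinv_0_lt_compat; lra].
  - apply (Rmult_le_reg_r (INR n)); [lra|]; unfold Rdiv; field_simplify; nra.
Qed.

Lemma node_inj (n j k : nat) : (1 <= n)%nat -> (j <= n)%nat -> (k <= n)%nat ->
  node n j = node n k -> j = k.
Proof.
  intros Hn Hj Hk Hjk.
  assert (Hn0 : 0 < INR n) by (apply lt_0_INR; lia).
  assert (Hangle : angle n j = angle n k).
  { apply cos_inj; [apply angle_mem; lia | apply angle_mem; lia |].
    unfold node in Hjk; unfold angle; lra. }
  apply INR_eq, (Rmult_eq_reg_r (PI / INR n)).
  - unfold angle, Rdiv in *; lra.
  - apply Rmult_integral_contrapositive; split;
      [apply PI_neq0 | apply Rinv_neq_0_compat; lra].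
Qed.

Lemma Rabs_offset_le_sin (n k : nat) : (1 <= n)%nat -> (k <= n)%nat ->
  Rabs (offset n k) <= sin (angle n k).
Proof. intros Hn Hk; apply Rabs_sub_base_cos_le_sin, angle_mem; lia. Qed.

Lemma sin_angle_add_mul_le (n j k : nat) : (1 <= n)%nat -> (j <= n)%nat -> (k <= n)%nat ->
  (sin (angle n k) + sin (angle n j)) * Rabs (INR j - INR k)
    <= INR n * Rabs (node n k - node n j).
Proof.
  intros Hn Hj Hk.
  assert (Hn0 : 0 < INR n) by (apply lt_0_INR; lia).
  assert (HPI := PI2_3_2).
  assert (Hdist := sin_add_sin_mul_dist_le (angle n k) (angle n j)
                     (angle_mem n k Hn Hk) (angle_mem n j Hn Hj)).
  replace (angle n k - angle n j) with ((INR k - INR j) * (PI / INR n)) in Hdist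
    by (unfold angle; field; lra).
  replace (node n k - node n j) with (cos (angle n j) - cos (angle n k))
    by (unfold node, angle; ring).
  rewrite Rabs_mult, (Rabs_right (PI / INR n)), Rabs_minus_sym in Hdist
    by (apply Rle_ge, Rlt_le, Rdiv_lt_0_compat; lra).
  rewrite (Rabs_minus_sym (cos _)).
  apply (Rmult_le_reg_r (PI / INR n)); [apply Rdiv_lt_0_compat; lra|].
  set (c := Rabs (cos (angle n k) - cos (angle n j))) in *.
  replace (INR n * c * (PI / INR n)) with (PI * c) by (field; lra).
  assert (2 * c <= PI * c) by (apply Rmult_le_compat_r; [apply Rabs_pos | lra]).
  lra.
Qed.

Lemma rjk_eq (n : nat) (theta : nat -> R) (j k : nat) : node n k <> node n j ->
  rjk n theta j k = (offset n k * theta k - offset n j * theta j) / (node n k - node n j).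
Proof.
  intros Hjk; unfold rjk, pnode, offset.
  field; lra.
Qed.

Lemma Rabs_rjk_le (n : nat) (theta : nat -> R) (j k : nat) :
  (1 <= n)%nat -> (j <= n)%nat -> (k <= n)%nat -> j <> k ->
  Rabs (rjk n theta j k) <= sup_norm n theta * INR n / Rabs (INR j - INR k).
Proof.
  intros Hn Hj Hk Hjk.
  set (M := sup_norm n theta).
  assert (Hnode : node n k - node n j <> 0)
    by (intro E; apply Hjk, (node_inj n); lia || lra).
  assert (Hdist : 0 < Rabs (INR j - INR k))
    by (apply Rabs_pos_lt; intro E; apply Hjk, INR_eq; lra).
  assert (Hnum : Rabs (offset n k * theta k - offset n j * theta j)
                   <= M * (sin (angle n k) + sin (angle n j))).
  { assert (Hk' := Rabs_le_sup_norm n theta k Hk).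
    assert (Hj' := Rabs_le_sup_norm n theta j Hj).
    fold M in Hk', Hj'.
    assert (Uk := Rabs_offset_le_sin n k Hn Hk).
    assert (Uj := Rabs_offset_le_sin n j Hn Hj).
    eapply Rle_trans; [apply Rabs_triang|]; rewrite Rabs_Ropp, !Rabs_mult.
    assert (Rabs (offset n k) * Rabs (theta k) <= sin (angle n k) * M)
      by (apply Rmult_le_compat; try apply Rabs_pos; lra).
    assert (Rabs (offset n j) * Rabs (theta j) <= sin (angle n j) * M)
      by (apply Rmult_le_compat; try apply Rabs_pos; lra).
    lra. }
  assert (Hden := sin_angle_add_mul_le n j k Hn Hj Hk).
  assert (HM := sup_norm_ge0 n theta); fold M in HM.
  assert (Hden_pos : 0 < Rabs (node n k - node n j)) by (apply Rabs_pos_lt; lra).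
  rewrite rjk_eq by lra; unfold Rdiv; rewrite Rabs_mult, Rabs_inv.
  apply (Rmult_le_reg_r (Rabs (node n k - node n j) * Rabs (INR j - INR k))); [nra|].
  field_simplify; try lra.
  assert (Rabs (offset n k * theta k - offset n j * theta j) * Rabs (INR j - INR k)
            <= M * (sin (angle n k) + sin (angle n j)) * Rabs (INR j - INR k))
    by (apply Rmult_le_compat_r; lra).
  nra.
Qed.

Fixpoint harmonic (m : nat) : R :=
  match m with O => 0 | S p => harmonic p + / INR (S p) end.

Lemma harmonic_sub (m i : nat) : (i < m)%nat ->
  harmonic (m - i) = harmonic (m - S i) + / (INR m - INR i).
Proof.
  intros Him; rewrite <- minus_INR by lia.
  replace (m - i)%nat with (S (m - S i)) by lia; reflexivity.
Qed.

Lemma harmonic_succ_le (m : nat) : harmonic (S m) <= 1 + ln (INR (S m)).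
Proof.
  induction m as [|m IHm].
  - simpl; rewrite ln_1; lra.
  - assert (Hm1 : 0 < INR (S m)) by (apply lt_0_INR; lia).
    assert (Hm2 : 0 < INR (S (S m))) by (apply lt_0_INR; lia).
    assert (Hexp := exp_ineq1_le (ln (INR (S m)) - ln (INR (S (S m))))).
    unfold Rminus in Hexp; rewrite exp_plus, exp_Ropp, !exp_ln in Hexp by lra.
    assert (Hstep : / INR (S (S m)) = 1 - INR (S m) / INR (S (S m)))
      by (rewrite (S_INR (S m)); field; lra).
    cbn [harmonic] in *; lra.
Qed.

Lemma harmonic_le_ln (m n : nat) : (m <= n)%nat -> harmonic m <= 1 + ln (INR n + 1).
Proof.
  intros Hmn.
  assert (Hn := pos_INR n).
  assert (Hln : 0 <= ln (INR n + 1)) by (rewrite <- ln_1; apply ln_le; lra).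
  destruct m as [|m]; [simpl; lra|].
  eapply Rle_trans; [apply harmonic_succ_le|].
  apply Rplus_le_compat_l, ln_le; [apply lt_0_INR; lia|].
  rewrite <- S_INR; apply le_INR; lia.
Qed.

Definition inv_dist (k j : nat) : R :=
  if Nat.eqb j k then 0 else / Rabs (INR j - INR k).

Lemma inv_dist_lt (k j : nat) : (j < k)%nat -> inv_dist k j = / (INR k - INR j).
Proof.
  intros Hjk; unfold inv_dist.
  replace (Nat.eqb j k) with false by (symmetry; apply Nat.eqb_neq; lia).
  rewrite Rabs_minus_sym, Rabs_right; [reflexivity|].
  apply Rge_minus, Rle_ge, le_INR; lia.
Qed.

Lemma inv_dist_gt (k j : nat) : (k < j)%nat -> inv_dist k j = / (INR j - INR k).
Proof.
  intros Hkj; unfold inv_dist.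
  replace (Nat.eqb j k) with false by (symmetry; apply Nat.eqb_neq; lia).
  rewrite Rabs_right; [reflexivity|].
  apply Rge_minus, Rle_ge, le_INR; lia.
Qed.

Lemma inv_dist_diag (k : nat) : inv_dist k k = 0.
Proof. unfold inv_dist; rewrite Nat.eqb_refl; reflexivity. Qed.

(* Truncated subtraction makes [harmonic (k - S N)] vanish once [N >= k]. *)
Lemma sum_inv_dist (k N : nat) :
  sum_f_R0 (inv_dist k) N + harmonic (k - S N) = harmonic k + harmonic (N - k).
Proof.
  induction N as [|N IHN]; cbn [sum_f_R0].
  - destruct k as [|k]; [rewrite inv_dist_diag; simpl; lra|].
    rewrite inv_dist_lt, Rplus_comm, <- harmonic_sub by lia.
    rewrite Nat.sub_0_r; change (harmonic (0 - S k)) with 0; lra.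
  - destruct (Nat.lt_total (S N) k) as [Hlt | [<- | Hgt]].
    + rewrite inv_dist_lt by lia.
      rewrite (harmonic_sub k (S N)) in IHN by lia.
      replace (N - k)%nat with 0%nat in IHN by lia.
      replace (S N - k)%nat with 0%nat by lia.
      lra.
    + rewrite inv_dist_diag, !Nat.sub_diag in *.
      replace (S N - S (S N))%nat with 0%nat by lia.
      replace (N - S N)%nat with 0%nat in IHN by lia.
      lra.
    + rewrite inv_dist_gt, (harmonic_sub (S N) k) by lia.
      replace (k - S N)%nat with 0%nat in IHN by lia.
      replace (k - S (S N))%nat with 0%nat by lia.
      replace (S N - S k)%nat with (N - k)%nat by lia.
      lra.
Qed.

Lemma sum_inv_dist_le (n k : nat) : (k <= n)%nat ->
  sum_f_R0 (inv_dist k) n <= 2 + 2 * ln (INR n + 1).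
Proof.
  intros Hk.
  assert (Hsum := sum_inv_dist k n).
  replace (k - S n)%nat with 0%nat in Hsum by lia.
  assert (Hk' := harmonic_le_ln k n Hk).
  assert (Hnk := harmonic_le_ln (n - k) n ltac:(lia)).
  simpl harmonic at 1 in Hsum; lra.
Qed.

Theorem theorem4 (n : nat) (theta : nat -> R) (k : nat) :
  (1 <= n)%nat -> (k <= n)%nat ->
  rsum n theta k <=
    sup_norm n theta * (32/10 + 23/10 * INR n + 43/10 * INR n * ln (INR n + 1)).
Proof.
  intros Hn Hk; unfold rsum.
  set (M := sup_norm n theta).
  assert (HM : 0 <= M) by apply sup_norm_ge0.
  assert (Hn0 := pos_INR n).
  assert (Hln : 0 <= ln (INR n + 1)) by (rewrite <- ln_1; apply ln_le; lra).
  assert (Hterm : sum_f_R0 (fun j => if Nat.eqb j k then 0 else Rabs (rjk n theta j k)) n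
                    <= sum_f_R0 (fun j => inv_dist k j * (M * INR n)) n).
  { apply sum_Rle; intros j Hj; unfold inv_dist.
    destruct (Nat.eqb_spec j k); [lra|].
    rewrite Rmult_comm; apply Rabs_rjk_le; lia. }
  rewrite <- scal_sum in Hterm.
  assert (Hsum := sum_inv_dist_le n k Hk).
  assert (sum_f_R0 (inv_dist k) n * (M * INR n)
            <= (2 + 2 * ln (INR n + 1)) * (M * INR n))
    by (apply Rmult_le_compat_r; [apply Rmult_le_pos|]; lra).
  assert (0 <= M * INR n * ln (INR n + 1)) by (apply Rmult_le_pos; [apply Rmult_le_pos|]; lra).
  nra.
Qed.
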